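(* Let $0<\lambda<1$, identify $\mathbb R^2$ with $\mathbb C$, let $f_j(z)=1+\theta_jz$ with $\theta_j=\lambda e^{(-1)^j i\pi/3}$ for $j=1,2$, let $A$ be the unique nonempty compact set with $A=f_1(A)\cup f_2(A)$, and let $Y=\{(x,y)\colon x=0\}$. Then for $j=1,2$, \[\mathrm{dist}(Y,f_j(A))=\mathrm{dist}(Y,A)\ge 1+\frac\lambda2-\frac{\lambda^2(1+2\lambda)}{2(1-\lambda^2)},\] and \[\mathrm{dist}(f_1(A),f_2(A))\ge\sqrt3\,\lambda-\sqrt3\,\frac{\lambda^3}{1-\lambda}.\]
   Context: For sets $S_1,S_2\subset\mathbb R^2$, $\mathrm{dist}(S_1,S_2)=\inf\{|x-y|\colon x\in S_1,y\in S_2\}$. *)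

From HB Require Import structures.
From mathcomp Require Import all_boot all_order all_algebra.
From mathcomp Require Import all_classical all_reals all_analysis.
Set Implicit Arguments. Unset Strict Implicit. Unset Printing Implicit Defensive.
Import Order.TTheory GRing.Theory Num.Theory numFieldNormedType.Exports.
Local Open Scope classical_set_scope.
Local Open Scope ring_scope.

Definition edist (R : realType) (p q : R * R) : R :=
  Num.sqrt ((p.1 - q.1) ^+ 2 + (p.2 - q.2) ^+ 2).

Definition setdist (R : realType) (S1 S2 : set (R * R)) : R :=
  inf [set d | exists x, exists y, [/\ S1 x, S2 y & d = edist x y]].

Definition theta (R : realType) (lam : R) (j : nat) : R * R :=
  (lam * cos ((-1) ^+ j * pi / 3), lam * sin ((-1) ^+ j * pi / 3)).

(* f_j(z) = 1 + theta_j z, complex multiplication written in coordinates *)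
Definition ifsmap (R : realType) (lam : R) (j : nat) (z : R * R) : R * R :=
  let t := theta lam j in
  (1 + (t.1 * z.1 - t.2 * z.2), t.1 * z.2 + t.2 * z.1).

Definition Yline (R : realType) : set (R * R) := [set p | p.1 = 0].

From Pilot Require Import Defs.
From HB Require Import structures.
From mathcomp Require Import all_boot all_order all_algebra.
From mathcomp Require Import all_classical all_reals all_analysis.
From mathcomp Require Import ring lra.
Import Order.TTheory GRing.Theory Num.Theory numFieldNormedType.Exports.
Local Open Scope classical_set_scope.
Local Open Scope ring_scope.

(* Complex conjugation exchanges f_1 and f_2, so the attractor A is symmetric about the
   real axis and f_1(A), f_2(A) are mirror images; in particular they are equally far from
   the imaginary axis Y.  For the bounds, A lies in every closed nonempty set invariant
   under f_1 and f_2.  We take the polygon cut out by the half-planes <u, z> >= h(u), u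
   ranging over the twelve directions at multiples of 30 degrees, with h the fixed point
   of h(u) = <u, 1> + lam * min_j h(rot_j u).  Then Re z >= h(0) on A, and the vertical
   gap between f_1(a) and f_2(b) is bounded below using h at +-30 degrees. *)

(* Shadows the extended distance [edist] of mathcomp-analysis. *)
Local Notation edist := Defs.edist.

Section EuclideanPlane.
Context {R : realType}.
Implicit Types (p q : R * R) (A K : set (R * R)).

Lemma edist_ge_abs1 p q : `|p.1 - q.1| <= edist p q.
Proof. by rewrite /edist -sqrtr_sqr ler_wsqrtr // lerDl sqr_ge0. Qed.

Lemma edist_ge_abs2 p q : `|p.2 - q.2| <= edist p q.
Proof. by rewrite /edist -sqrtr_sqr ler_wsqrtr // lerDr sqr_ge0. Qed.

Lemma edist_le_abs p q : edist p q <= `|p.1 - q.1| + `|p.2 - q.2|.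
Proof.
rewrite /edist -[X in _ <= X]ger0_norm ?addr_ge0 // -sqrtr_sqr ler_wsqrtr //.
rewrite -(real_normK (num_real (p.1 - q.1))) -(real_normK (num_real (p.2 - q.2))).
by rewrite sqrrD lerD2r lerDl mulrn_wge0 // mulr_ge0.
Qed.

Lemma bounded_edist A k : bounded_set A -> exists M, forall a, A a -> edist a k <= M.
Proof.
move=> [M0 [_ AM]]; exists (2 * (`|M0| + 1) + `|k.1| + `|k.2|) => a Aa.
have M0lt : M0 < `|M0| + 1 by rewrite (le_lt_trans (ler_norm M0)) ?ltrDl.
have := AM _ M0lt a Aa.
rewrite /= prod_normE ge_max => /andP [a1 a2].
apply: le_trans (edist_le_abs a k) _.
have := ler_normB a.1 k.1; have := ler_normB a.2 k.2; lra.
Qed.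

Lemma closed_edist_approx K a : closed K ->
  (forall e, 0 < e -> exists2 k, K k & edist a k < e) -> K a.
Proof.
move=> /closure_id + approx => -> B /nbhs_ballP [e e0 eB].
have [k Kk ak] := approx e e0; exists k; split => //; apply: eB.
split; rewrite /= -ball_normE /=.
- exact: le_lt_trans (edist_ge_abs1 a k) ak.
- exact: le_lt_trans (edist_ge_abs2 a k) ak.
Qed.

Lemma geometric_lt {r e : R} (M : R) : 0 <= r -> r < 1 -> 0 < e -> exists n, r ^+ n * M < e.
Proof.
move=> r0 r1 e0.
have eM : 0 < e / (`|M| + 1) by rewrite divr_gt0 // ltr_pwDr.
have r1' : `|r| < 1 by rewrite ger0_norm.
have [n _ /(_ n (leqnn n)) /=] := cvgr0_norm_lt _ (cvg_expr r1') _ eM.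
rewrite ger0_norm ?exprn_ge0 // ltr_pdivlMr ?ltr_pwDr // => rn.
exists n; apply: le_lt_trans rn; rewrite mulrDr mulr1.
have := ler_norm M; have := exprn_ge0 n r0; nra.
Qed.

Section SelfSimilarSet.
Variables (I : Type) (S : set I) (f : I -> R * R -> R * R) (r : R).
Hypotheses (r_ge0 : 0 <= r) (r_lt1 : r < 1).
Hypothesis f_lipschitz : forall i, S i -> forall p q, edist (f i p) (f i q) <= r * edist p q.

Lemma self_similar_sub_closed A K : bounded_set A ->
  A `<=` \bigcup_(i in S) f i @` A ->
  closed K -> K !=set0 -> (forall i, S i -> f i @` K `<=` K) -> A `<=` K.
Proof.
move=> Abd Acover Kcl [k0 Kk0] Kinv.
have [M AM] := bounded_edist _ k0 Abd.
have approx n a : A a -> exists2 k, K k & edist a k <= r ^+ n * M.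
  elim: n a => [|n IH] a Aa.
    by exists k0; rewrite // expr0 mul1r; apply: AM.
  have [i Si [a' Aa' <-]] := Acover a Aa.
  have [k Kk a'k] := IH a' Aa'.
  exists (f i k); first by apply: (Kinv i Si); exists k.
  rewrite exprS -mulrA; apply: le_trans (f_lipschitz i Si a' k) _.
  exact: ler_wpM2l.
move=> a Aa; apply: closed_edist_approx Kcl _ => e e0.
have [n rnM] := geometric_lt M r_ge0 r_lt1 e0.
by have [k Kk ak] := approx n a Aa; exists k => //; apply: le_lt_trans rnM.
Qed.

End SelfSimilarSet.

Lemma closed_all (T : Type) (P : T -> R * R -> bool) (s : seq T) :
  (forall c, closed [set p | P c p]) -> closed [set p | all (P^~ p) s].
Proof.
move=> Pcl; elim: s => [|c s IH] /=; first by rewrite set_true; exact: closedT.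
have -> : [set p | P c p && all (P^~ p) s] = [set p | P c p] `&` [set p | all (P^~ p) s].
  by apply/seteqP; split => p /= /andP.
exact: closedI.
Qed.

Lemma setdist_ge (S B : set (R * R)) (b : R) : S !=set0 -> B !=set0 ->
  (forall x y, S x -> B y -> b <= edist x y) -> b <= setdist S B.
Proof.
move=> [x Sx] [y By] le_b; apply: lb_le_inf; first by exists (edist x y), x, y.
by move=> _ [x' [y' [Sx' By' ->]]]; apply: le_b.
Qed.

Lemma setdist_setU_image (S B : set (R * R)) (s : R * R -> R * R) :
  involutive s -> (forall p q, edist (s p) (s q) = edist p q) ->
  (forall p, S p -> S (s p)) -> setdist S (B `|` s @` B) = setdist S B.
Proof.
move=> sK s_isom Ss; rewrite /setdist; congr inf.
apply/seteqP; split => _ [x [y [Sx By ->]]]; last by exists x, y; split => //; left.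
case: By => [By | [y' By' <-]]; first by exists x, y.
by exists (s x), y'; split => //; [exact: Ss | rewrite -s_isom sK].
Qed.

End EuclideanPlane.

Section Similitudes.
Context {R : realType}.
Implicit Types (lam : R) (p q : R * R).

Definition cconj p : R * R := (p.1, - p.2).

Lemma cconjK : involutive cconj.
Proof. by case=> x y; rewrite /cconj opprK. Qed.

Lemma edist_cconj p q : edist (cconj p) (cconj q) = edist p q.
Proof. by rewrite /edist /cconj /= -opprD sqrrN. Qed.

Lemma continuous_cconj : continuous cconj.
Proof.
move=> p; apply: (@cvg_pair _ _ _ (nbhs p) (nbhs p.1) (nbhs (- p.2))).
- exact: cvg_fst.
- by apply: cvgN; exact: cvg_snd.
Qed.

Lemma ifsmap_edist lam j p q :
  edist (ifsmap lam j p) (ifsmap lam j q) = `|lam| * edist p q.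
Proof.
rewrite /edist -sqrtr_sqr -sqrtrM ?sqr_ge0 //; congr Num.sqrt.
rewrite /ifsmap /theta /=; set c := cos _; set s := sin _.
transitivity (lam ^+ 2 * (c ^+ 2 + s ^+ 2) * ((p.1 - q.1) ^+ 2 + (p.2 - q.2) ^+ 2)).
  by ring.
by rewrite cos2Dsin2 mulr1.
Qed.

Lemma cconj_ifsmap lam j p : cconj (ifsmap lam j p) = ifsmap lam j.+1 (cconj p).
Proof.
rewrite /ifsmap /theta /cconj /= exprS mulN1r !mulNr cosN sinN.
congr (_, _); ring.
Qed.

Lemma ifsmapSS lam j : ifsmap lam j.+2 = ifsmap lam j.
Proof. by rewrite /ifsmap /theta !exprS !mulN1r opprK. Qed.

Lemma cos_pi3 : cos (pi / 3 : R) = 1 / 2.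
Proof.
have pi_gt0 : (0 : R) < pi := pi_gt0 R.
have cos_gt0 : 0 < cos (pi / 3 : R) by apply: cos_gt0_pihalf; lra.
(* cos (2 pi / 3) = 2 c^2 - 1 = - c for c = cos (pi / 3) > 0 *)
have : cos ((pi / 3) *+ 2 : R) = - cos (pi / 3).
  have -> : (pi / 3) *+ 2 = pi - pi / 3 :> R by rewrite mulr2n; field.
  by rewrite cosB cospi sinpi; ring.
rewrite cos_mulr2n; nra.
Qed.

Local Notation s3 := (Num.sqrt (3 : R)).

Lemma sqrt3_sqr : s3 * s3 = 3.
Proof. by rewrite -expr2 sqr_sqrtr // ler0n. Qed.

Lemma sin_pi3 : sin (pi / 3 : R) = s3 / 2.
Proof.
have pi_gt0 : (0 : R) < pi := pi_gt0 R.
have sin_gt0 : 0 < sin (pi / 3 : R) by apply: sin_gt0_pi; lra.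
have := sin2cos2 (pi / 3 : R); rewrite cos_pi3.
have := sqrt3_sqr; have := sqrtr_ge0 (3 : R); nra.
Qed.

Lemma ifsmap1E lam p :
  ifsmap lam 1 p = (1 + lam * p.1 / 2 + lam * s3 * p.2 / 2, lam * p.2 / 2 - lam * s3 * p.1 / 2).
Proof.
rewrite /ifsmap /theta /= expr1 mulN1r mulNr cosN sinN cos_pi3 sin_pi3.
congr (_, _); ring.
Qed.

Lemma ifsmap2E lam p :
  ifsmap lam 2 p = (1 + lam * p.1 / 2 - lam * s3 * p.2 / 2, lam * p.2 / 2 + lam * s3 * p.1 / 2).
Proof.
rewrite /ifsmap /theta /= sqrrN expr1n mul1r cos_pi3 sin_pi3.
congr (_, _); ring.
Qed.

(* In the coordinates (x, sqrt 3 y) both maps have rational coefficients. *)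
Definition lform (a b : R) p : R := a * p.1 + b * (s3 * p.2).

Lemma continuous_lform a b : continuous (lform a b).
Proof.
move=> p; apply: cvgD; apply: cvgMl_tmp; first exact: cvg_fst.
by apply: cvgMl_tmp; exact: cvg_snd.
Qed.

(* Pulling back along f_1 (resp. f_2) turns the direction (a, sqrt 3 b) of a linear form
   by +60 (resp. -60) degrees. *)
Lemma lform_ifsmap1 lam a b p :
  lform a b (ifsmap lam 1 p) = a + lam * lform (a / 2 - 3 * b / 2) (a / 2 + b / 2) p.
Proof. by rewrite -[in RHS]sqrt3_sqr ifsmap1E /lform /=; ring. Qed.

Lemma lform_ifsmap2 lam a b p :
  lform a b (ifsmap lam 2 p) = a + lam * lform (a / 2 + 3 * b / 2) (b / 2 - a / 2) p.
Proof. by rewrite -[in RHS]sqrt3_sqr ifsmap2E /lform /=; ring. Qed.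

Lemma ifsmap_gap lam p q : s3 * ((ifsmap lam 2 q).2 - (ifsmap lam 1 p).2) =
  lam * (lform (3 / 2) (-1 / 2) p + lform (3 / 2) (1 / 2) q).
Proof. by rewrite -[in RHS]sqrt3_sqr ifsmap1E ifsmap2E /lform /=; ring. Qed.

End Similitudes.

Section Polygon.
Context {R : realType}.
Variable lam : R.

(* [supp<d>] is the minimum over the attractor of the linear form in direction d degrees
   (of length 1 for d = 0, 60, 120, 180 and sqrt 3 for d = 30, 90, 150): these values
   solve h(u) = <u, 1> + lam * min_j h(rot_j u), which makes [polygon] invariant. *)
Definition supp120 := - (1 + 2 * lam) / (2 * (1 - lam ^+ 2)).
Definition supp180 := - (2 + lam) / (2 * (1 - lam ^+ 2)).
Definition supp60 := 1 / 2 + lam * supp120.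
Definition supp0 := 1 + lam * supp60.
Definition supp150 := - 3 / (2 * (1 - lam)).
Definition supp90 := lam * supp150.
Definition supp30 := 3 / 2 + lam * supp90.

Lemma supp_fixpoint : 0 < lam -> lam < 1 ->
  [/\ supp120 = - 1 / 2 + lam * supp180, supp180 = - 1 + lam * supp120
    & supp150 = - 3 / 2 + lam * supp150].
Proof.
move=> lam_gt0 lam_lt1; have lam1 : 0 < 1 - lam by lra.
have lam2 : 0 < 1 - lam ^+ 2 by nra.
by split; rewrite /supp120 /supp180 /supp150; field; rewrite lt0r_neq0.
Qed.

Lemma supp_ub : 0 < lam -> lam < 1 -> supp120 <= - (2 + lam) / 4 /\ supp150 <= - 3 / 2.
Proof.
move=> lam_gt0 lam_lt1; have lam2 : 0 < 2 * (1 - lam ^+ 2) by nra.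
by split; rewrite ler_pdivrMr //; nra.
Qed.

Lemma supp_le : 0 < lam -> lam < 1 ->
  [/\ supp120 <= supp0, supp180 <= supp60, supp150 <= supp90 & supp90 <= supp30].
Proof.
move=> lam_gt0 lam_lt1.
have [_ e180 _] := supp_fixpoint lam_gt0 lam_lt1.
have [ub120 ub150] := supp_ub lam_gt0 lam_lt1.
have n120 : supp120 < 0 by lra.
have n150 : supp150 < 0 by lra.
have lam2 : 0 < 1 - lam ^+ 2 by nra.
have lam1 : 0 < lam * (1 - lam) by nra.
rewrite /supp0 /supp60 /supp30 /supp90; split; nra.
Qed.

Definition polygon_constraints : seq (R * R * R) :=
  [:: (supp0, 1, 0); (supp60, 1 / 2, 1 / 2); (supp60, 1 / 2, - 1 / 2);
      (supp120, - 1 / 2, 1 / 2); (supp120, - 1 / 2, - 1 / 2); (supp180, - 1, 0);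
      (supp30, 3 / 2, 1 / 2); (supp30, 3 / 2, - 1 / 2); (supp90, 0, 1);
      (supp90, 0, - 1); (supp150, - 3 / 2, 1 / 2); (supp150, - 3 / 2, - 1 / 2)].

Definition polygon : set (R * R) :=
  [set p | all (fun c : R * R * R => c.1.1 <= lform c.1.2 c.2 p) polygon_constraints].

Lemma polygon_ifsmap j p : 0 < lam -> lam < 1 -> (j = 1 \/ j = 2)%N ->
  polygon p -> polygon (ifsmap lam j p).
Proof.
move=> lam_gt0 lam_lt1 hj.
have [e120 e180 e150] := supp_fixpoint lam_gt0 lam_lt1.
have [l0 l60 l90 l30] : [/\ lam * supp120 <= lam * supp0, lam * supp180 <= lam * supp60,
    lam * supp150 <= lam * supp90 & lam * supp90 <= lam * supp30].
  by have [? ? ? ?] := supp_le lam_gt0 lam_lt1; split; rewrite ler_pM2l.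
have scale (c : R * R * R) :
    c.1.1 <= lform c.1.2 c.2 p -> lam * c.1.1 <= lam * lform c.1.2 c.2 p.
  by rewrite ler_pM2l.
move=> /(sub_all scale); rewrite /= /lform; clear scale.
move=> /and4P [h1 h2 h3 /and4P [h4 h5 h6 /and4P [h7 h8 h9 /and4P [h10 h11 h12 _]]]].
have [e0 e60 e30 e90] : [/\ supp0 = 1 + lam * supp60, supp60 = 1 / 2 + lam * supp120,
  supp30 = 3 / 2 + lam * supp90 & supp90 = lam * supp150] by [].
case: hj => ->; rewrite /polygon /= ?lform_ifsmap1 ?lform_ifsmap2 /lform andbT;
  by repeat (apply/andP; split); lra.
Qed.

Lemma supp0E : 0 < lam -> lam < 1 ->
  supp0 = 1 + lam / 2 - lam ^+ 2 * (1 + 2 * lam) / (2 * (1 - lam ^+ 2)).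
Proof.
move=> lam_gt0 lam_lt1; have lam2 : 0 < 1 - lam ^+ 2 by nra.
by rewrite /supp0 /supp60 /supp120; field; rewrite lt0r_neq0.
Qed.

Lemma supp30E : 0 < lam -> lam < 1 ->
  lam * (supp30 + supp30) = 3 * lam - 3 * (lam ^+ 3 / (1 - lam)).
Proof.
move=> lam_gt0 lam_lt1; have lam1 : 0 < 1 - lam by lra.
by rewrite /supp30 /supp90 /supp150; field; rewrite lt0r_neq0.
Qed.

Lemma polygon_closed : closed polygon.
Proof.
apply: closed_all => c.
exact: preimage_closed (fun p _ => continuous_lform c.1.2 c.2 p) (@closed_ge _ c.1.1).
Qed.

Lemma polygon_base_point : 0 < lam -> lam < 1 -> polygon (1 + lam / 2, 0).
Proof.
move=> lam_gt0 lam_lt1.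
have [_ e180 e150] := supp_fixpoint lam_gt0 lam_lt1.
have [ub120 ub150] := supp_ub lam_gt0 lam_lt1.
rewrite /polygon /lform /= !mulr0 !addr0 /supp0 /supp60 /supp30 /supp90 andbT.
by repeat (apply/andP; split); nra.
Qed.

Lemma polygon_bounds p : polygon p ->
  [/\ supp0 <= p.1, supp30 <= lform (3 / 2) (1 / 2) p & supp30 <= lform (3 / 2) (- 1 / 2) p].
Proof.
move=> /and4P [h0 _ _ /and4P [_ _ _ /and4P [h30 h30' _ _]]].
by split => //; rewrite /lform mul1r mul0r addr0 in h0.
Qed.

End Polygon.

Section Attractor.
Context {R : realType}.
Variables (lam : R) (A : set (R * R)).
Hypotheses (lam_gt0 : 0 < lam) (lam_lt1 : lam < 1) (A_n0 : A !=set0) (A_compact : compact A).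
Hypothesis A_eq : A = ifsmap lam 1 @` A `|` ifsmap lam 2 @` A.

Lemma attractor_ifsmap j p : (j = 1 \/ j = 2)%N -> A p -> A (ifsmap lam j p).
Proof. by move=> [] -> Ap; rewrite A_eq; [left | right]; exists p. Qed.

Lemma attractor_sub K : closed K -> K !=set0 ->
  (forall j p, (j = 1 \/ j = 2)%N -> K p -> K (ifsmap lam j p)) -> A `<=` K.
Proof.
move=> Kcl Kn0 Kinv.
apply: (@self_similar_sub_closed _ _ [set j | (j = 1 \/ j = 2)%N] (ifsmap lam) lam) => //.
- exact: ltW.
- by move=> j _ p q; rewrite ifsmap_edist gtr0_norm.
- exact: compact_bounded.
- by move=> a; rewrite {1}A_eq => -[] Aa; [exists 1%N; first left | exists 2%N; first right].
- by move=> j Sj _ [p Kp <-]; apply: Kinv.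
Qed.

Lemma attractor_cconj a : A a -> A (cconj a).
Proof.
apply: (attractor_sub (cconj @^-1` A)).
- exact: preimage_closed (fun p _ => continuous_cconj p) (compact_closed _ A_compact).
- by have [a0 Aa0] := A_n0; exists (cconj a0); rewrite /= cconjK.
- move=> j p [->|->] Ap /=; rewrite cconj_ifsmap.
  + by apply: attractor_ifsmap Ap; right.
  + by rewrite (ifsmapSS lam 1); apply: attractor_ifsmap Ap; left.
Qed.

Lemma ifsmapS_attractor j : ifsmap lam j.+1 @` A = cconj @` (ifsmap lam j @` A).
Proof.
rewrite image_comp; apply/seteqP; split => _ [a Aa <-].
- by exists (cconj a); [exact: attractor_cconj | rewrite /= cconj_ifsmap cconjK].
- by exists (cconj a); [exact: attractor_cconj | rewrite /= cconj_ifsmap].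
Qed.

Lemma attractor_bounds {a} : A a -> [/\ supp0 lam <= a.1,
  supp30 lam <= lform (3 / 2) (1 / 2) a & supp30 lam <= lform (3 / 2) (- 1 / 2) a].
Proof.
move: a; suff A_polygon : A `<=` polygon lam by move=> a /A_polygon /polygon_bounds.
apply: attractor_sub; first exact: polygon_closed.
- by exists (1 + lam / 2, 0); exact: polygon_base_point.
- by move=> j p hj; exact: polygon_ifsmap.
Qed.

Lemma setdist_Yline_ifsmap j : (j = 1 \/ j = 2)%N ->
  setdist (@Yline R) (ifsmap lam j @` A) = setdist (@Yline R) A.
Proof.
have Y_cconj p : Yline p -> Yline (cconj p) by [].
move=> [->|->]; rewrite [in RHS]A_eq.
- by rewrite (ifsmapS_attractor 1) setdist_setU_image //; [exact: cconjK | exact: edist_cconj].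
- rewrite setUC -[ifsmap lam 1](ifsmapSS lam 1) (ifsmapS_attractor 2).
  by rewrite setdist_setU_image //; [exact: cconjK | exact: edist_cconj].
Qed.

Lemma setdist_Yline_ge : supp0 lam <= setdist (@Yline R) A.
Proof.
apply: setdist_ge => [|//|x a Yx Aa]; first by exists (0, 0).
have [a1 _ _] := attractor_bounds Aa.
apply: le_trans (edist_ge_abs1 x a); rewrite Yx sub0r normrN.
exact: le_trans a1 (ler_norm _).
Qed.

Lemma setdist_ifsmap_ge : Num.sqrt 3 * lam - Num.sqrt 3 * (lam ^+ 3 / (1 - lam))
  <= setdist (ifsmap lam 1 @` A) (ifsmap lam 2 @` A).
Proof.
have [a0 Aa0] := A_n0.
apply: setdist_ge; [by exists (ifsmap lam 1 a0), a0 | by exists (ifsmap lam 2 a0), a0 |].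
move=> _ _ [a Aa <-] [b Ab <-].
have [_ _ a30] := attractor_bounds Aa.
have [_ b30 _] := attractor_bounds Ab.
apply: le_trans (edist_ge_abs2 _ _); rewrite distrC; apply: le_trans (ler_norm _).
have s3_gt0 : 0 < Num.sqrt (3 : R) by rewrite sqrtr_gt0 ltr0n.
rewrite -(ler_pM2l s3_gt0) ifsmap_gap mulrBr !(mulrA (Num.sqrt 3)) sqrt3_sqr -supp30E //.
by rewrite ler_pM2l //; apply: lerD.
Qed.

End Attractor.

Theorem lemma3p4 (R : realType) (lam : R) (A : set (R * R)) :
  0 < lam -> lam < 1 ->
  A !=set0 -> compact A ->
  A = ifsmap lam 1 @` A `|` ifsmap lam 2 @` A ->
  (forall j : nat, (j = 1 \/ j = 2)%N ->
     setdist (@Yline R) (ifsmap lam j @` A) = setdist (@Yline R) A /\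
     1 + lam / 2 - lam ^+ 2 * (1 + 2 * lam) / (2 * (1 - lam ^+ 2))
       <= setdist (@Yline R) A) /\
  Num.sqrt 3 * lam - Num.sqrt 3 * (lam ^+ 3 / (1 - lam))
    <= setdist (ifsmap lam 1 @` A) (ifsmap lam 2 @` A).
Proof.
move=> lam_gt0 lam_lt1 A_n0 A_compact A_eq.
split; last exact: setdist_ifsmap_ge.
move=> j hj; split; first exact: setdist_Yline_ifsmap.
by rewrite -supp0E //; exact: setdist_Yline_ge.
Qed.
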